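(* For every $\xi\in\Xi$, the hybrid system $\mathcal H_\xi$ renders $\mathcal A_s$ strongly forward invariant for the sub-state $\tau$, and $\mathcal A:=\mathcal A_s\times\mathbb Z_{\ge0}$ strongly forward invariant for the state $x$: every complete solution $x=(\tau,\lambda)$ of $\mathcal H_\xi$ with $\tau(0,0)\in\mathcal A_s$ satisfies $\tau(t,k)\in\mathcal A_s$ (equivalently $x(t,k)\in\mathcal A$) for all $(t,k)\in\operatorname{dom}(x)$.
   Context: $\mathcal G=(\mathcal V,\mathcal E)$ is a simple digraph on $\mathcal V=\{1,\dots,N\}$; $(i,j)\in\mathcal E$ means $j$ is an out-neighbor of $i$; $\mathcal E_i^-$ is the set of out-edges of $i$. Fix $T>0$, $r\in(0,1)^N$. A subgraph $(\mathcal V,\mathcal E')$, $\mathcal E'\subseteq\mathcal E$, is feasible if for every $i$ either $\mathcal E_i^-\subseteq\mathcal E'$ or $\mathcal E_i^-\cap\mathcal E'=\varnothing$. $\Xi$ is the set of infinite sequences $\xi=\phi_1\phi_2\cdots$ of feasible subgraphs, $\phi_\lambda=(\mathcal V,\mathcal E_\lambda)$. Hybrid system $\mathcal H_\xi$: state $x=(\tau,\lambda)\in\mathbb R^N_{\ge0}\times\mathbb Z_{\ge0}$; flow set $C=[0,1]^N\times\mathbb Z_{\ge0}$ with $\dot\tau=\frac1T\mathbf 1_N$, $\dot\lambda=0$; jump set $D=\{\tau\in[0,1]^N:\max_i\tau_i=1\}\times\mathbb Z_{\ge0}$ with $x^+\in G_{\lambda+1}(\tau)\times\{\lambda+1\}$,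 where $G_\lambda$ is the outer-semicontinuous hull of $G_\lambda^0(\tau)=\{g\in\mathbb R^N:g_i=0,\ g_j\in\mathcal R_{j,\lambda}(\tau)\ \forall j\ne i\}$, $i$ an agent with $\tau_i=1$, and $\mathcal R_{j,\lambda}(\tau)=\{0\}$, $\{0,1\}$, $\{1\}$ if $(i,j)\in\mathcal E_\lambda$ and $\tau_j<r_j$, $=r_j$, $>r_j$ respectively, and $\{\tau_j\}$ if $(i,j)\notin\mathcal E_\lambda$. Solutions are hybrid arcs on hybrid time domains that flow in $C$ according to the flow map and jump from $D$ via the jump map; complete means the domain is unbounded. $\mathcal A_s:=\{\mu\mathbf 1_N:\mu\in[0,1]\}\cup\{0,1\}^N$. *)

From Stdlib Require Import Reals Lra Lia.
Open Scope R_scope.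

(* Agents are indexed 0..N-1 (paper: 1..N).  Vectors in R^N are functions
   nat -> R of which only the coordinates i < N are meaningful. *)
Definition vec := nat -> R.

(* Simple digraph on {0,..,N-1}: edge (i,j) means j is an out-neighbour of i. *)
Definition simple_digraph (N : nat) (E : nat -> nat -> Prop) : Prop :=
  forall i j, E i j -> (i < N)%nat /\ (j < N)%nat /\ i <> j.

Definition feasible (E E' : nat -> nat -> Prop) : Prop :=
  (forall i j, E' i j -> E i j) /\
  (forall i, (forall j, E i j -> E' i j) \/ (forall j, ~ E' i j)).

Definition in_As (N : nat) (tau : vec) : Prop :=
  (exists mu, 0 <= mu <= 1 /\ forall i, (i < N)%nat -> tau i = mu) \/
  (forall i, (i < N)%nat -> tau i = 0 \/ tau i = 1).

(* tau-part of the flow set C = [0,1]^N x Z>=0 (which is closed) *)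
Definition inC (N : nat) (tau : vec) : Prop :=
  forall i, (i < N)%nat -> 0 <= tau i <= 1.

(* tau-part of the jump set D = {tau in [0,1]^N : max_i tau_i = 1} x Z>=0 *)
Definition inD (N : nat) (tau : vec) : Prop :=
  inC N tau /\ exists i, (i < N)%nat /\ tau i = 1.

(* g_j ∈ R_{j,lambda}(tau), for the firing agent i and edge set E_lambda *)
Definition Rset (El : nat -> nat -> Prop) (r : vec) (i j : nat) (tau : vec) (g : R) : Prop :=
  (El i j /\ ((tau j < r j /\ g = 0) \/ (tau j = r j /\ (g = 0 \/ g = 1)) \/
              (r j < tau j /\ g = 1)))
  \/ (~ El i j /\ g = tau j).

Definition G0 (N : nat) (El : nat -> nat -> Prop) (r : vec) (tau g : vec) : Prop :=
  inD N tau /\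
  exists i, (i < N)%nat /\ tau i = 1 /\ g i = 0 /\
    forall j, (j < N)%nat -> j <> i -> Rset El r i j tau (g j).

(* G_lambda: outer-semicontinuous hull of G^0_lambda, i.e. the set-valued map
   whose graph is the closure (in R^N x R^N) of the graph of G^0_lambda. *)
Definition Ghull (N : nat) (El : nat -> nat -> Prop) (r : vec) (tau g : vec) : Prop :=
  exists (ts gs : nat -> vec),
    (forall n, G0 N El r (ts n) (gs n)) /\
    forall j, (j < N)%nat ->
      Un_cv (fun n => ts n j) (tau j) /\ Un_cv (fun n => gs n j) (g j).

(* Hybrid time domains: subsets E of R>=0 x N such that every truncation
   E ∩ ([0,T] x {0..J}), (T,J) ∈ E, is a compact hybrid time domain
   ∪_{j=0}^{J} [t_j, t_{j+1}] x {j} with 0 = t_0 <= t_1 <= ... <= t_{J+1} = T. *)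
Definition hybrid_time_domain (E : R -> nat -> Prop) : Prop :=
  (forall t j, E t j -> 0 <= t) /\
  forall T J, E T J ->
    exists tt : nat -> R,
      tt 0%nat = 0 /\ (forall k, (k <= J)%nat -> tt k <= tt (S k)) /\ tt (S J) = T /\
      forall t j, (E t j /\ t <= T /\ (j <= J)%nat) <-> ((j <= J)%nat /\ tt j <= t <= tt (S j)).

Definition null_set (S : R -> Prop) : Prop :=
  forall eps, 0 < eps ->
    exists a b : nat -> R,
      (forall n, a n <= b n) /\
      (forall x, S x -> exists n, a n < x < b n) /\
      (forall m, sum_f_R0 (fun n => b n - a n) m <= eps).

Definition ae_on (I P : R -> Prop) : Prop := null_set (fun t => I t /\ ~ P t).

Definition interior (I : R -> Prop) (t : R) : Prop :=
  exists e, 0 < e /\ forall s, t - e < s < t + e -> I s.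

Definition abs_cont_on (f : R -> R) (a b : R) : Prop :=
  forall eps, 0 < eps -> exists delta, 0 < delta /\
    forall (n : nat) (u v : nat -> R),
      (forall k, (k <= n)%nat -> a <= u k /\ u k <= v k /\ v k <= b) ->
      (forall k l, (k < l)%nat -> (l <= n)%nat -> v k <= u l) ->
      sum_f_R0 (fun k => v k - u k) n < delta ->
      sum_f_R0 (fun k => Rabs (f (v k) - f (u k))) n < eps.

Definition loc_abs_cont_on (f : R -> R) (I : R -> Prop) : Prop :=
  forall a b, a <= b -> (forall t, a <= t <= b -> I t) -> abs_cont_on f a b.

Definition hybrid_arc (N : nat) (dom : R -> nat -> Prop)
    (tau : R -> nat -> vec) (lam : R -> nat -> nat) : Prop :=
  hybrid_time_domain dom /\
  forall j,
    (forall i, (i < N)%nat -> loc_abs_cont_on (fun s => tau s j i) (fun s => dom s j)) /\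
    loc_abs_cont_on (fun s => INR (lam s j)) (fun s => dom s j).

(* Solutions of H_xi (Goebel–Sanfelice–Teel): xi k is the k-th feasible
   subgraph phi_k (k >= 1), given by its edge relation. *)
Definition is_solution (N : nat) (T : R) (r : vec) (xi : nat -> nat -> nat -> Prop)
    (dom : R -> nat -> Prop) (tau : R -> nat -> vec) (lam : R -> nat -> nat) : Prop :=
  hybrid_arc N dom tau lam /\
  (dom 0 0%nat -> inC N (tau 0 0%nat) \/ inD N (tau 0 0%nat)) /\
  (forall j, (exists a b, a < b /\ forall t, a < t < b -> dom t j) ->
     (forall t, interior (fun s => dom s j) t -> inC N (tau t j)) /\
     ae_on (fun s => dom s j)
       (fun t => interior (fun s => dom s j) t /\
          (forall i, (i < N)%nat -> derivable_pt_lim (fun s => tau s j i) t (1 / T)) /\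
          derivable_pt_lim (fun s => INR (lam s j)) t 0)) /\
  (forall t j, dom t j -> dom t (S j) ->
     inD N (tau t j) /\
     Ghull N (xi (S (lam t j))) r (tau t j) (tau t (S j)) /\
     lam t (S j) = S (lam t j)).

Definition complete (dom : R -> nat -> Prop) : Prop :=
  forall M, exists t j, dom t j /\ M <= t + INR j.

(* Along a flow every coordinate of tau grows with slope 1/T: an absolutely
   continuous function whose derivative is a.e. a constant c is affine with slope c,
   proved by real induction, charging the increment near exceptional points to a
   countable cover of small total length of the exceptional null set.  Hence a flow keeps a
   synchronized state mu 1 synchronized (the bound mu <= 1 at the end comes from C
   being closed), and a state in {0,1}^N with a nontrivial flow ahead has no
   coordinate at 1, so it is 0 1.  A jump leaves from D, so from a synchronized
   state it leaves from 1 1, in {0,1}^N; from there every value of G^0 has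
   coordinates in {0, 1, tau_j} = {0, 1}, and so do limits of such values, i.e.
   values of the outer-semicontinuous hull.  Induction on the jump counter
   concludes. *)

From Stdlib Require Import Reals Lra Lia Classical.
Open Scope R_scope.

Lemma real_induction (a b : R) (P : R -> Prop) :
  a <= b -> P a ->
  (forall x, a <= x <= b -> exists d, 0 < d /\
     forall y z, x - d < y <= x -> x <= z < x + d -> a <= y -> z <= b -> P y -> P z) ->
  P b.
Proof.
  intros Hab Pa Hstep.
  set (E := fun x => a <= x <= b /\ P x).
  destruct (completeness E) as [s [Hub Hlub]].
  { exists b; intros x [Hx _]; lra. }
  { exists a; split; [lra | exact Pa]. }
  assert (Has : a <= s) by (apply Hub; split; [lra | exact Pa]).
  assert (Hsb : s <= b) by (apply Hlub; intros x [Hx _]; lra).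
  destruct (Hstep s (conj Has Hsb)) as [d [Hd Hs]].
  assert (Hnear : exists x, E x /\ s - d < x).
  { apply NNPP; intro Hno.
    enough (s <= s - d) by lra.
    apply Hlub; intros x Ex.
    apply Rnot_lt_le; intro Hx; apply Hno; exists x; auto. }
  destruct Hnear as [x [[Hx Px] Hxs]].
  assert (x <= s) by (apply Hub; split; assumption).
  assert (Ps : P s) by (apply (Hs x s); [lra | lra | lra | lra | exact Px]).
  destruct (Req_dec s b) as [<- | Hsb']; [exact Ps |].
  set (z := Rmin (s + d / 2) b).
  assert (Hz : s < z <= b /\ z < s + d) by (unfold z, Rmin; destruct Rle_dec; lra).
  assert (Pz : P z) by (apply (Hs s z); [lra | lra | lra | lra | exact Ps]).
  assert (z <= s) by (apply Hub; split; [lra | exact Pz]).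
  lra.
Qed.

Lemma sum_f_R0_nonneg_mono (f : nat -> R) (m n : nat) :
  (forall k, 0 <= f k) -> (m <= n)%nat -> sum_f_R0 f m <= sum_f_R0 f n.
Proof.
  intros Hf Hmn; induction Hmn as [| n _ IH]; [lra |].
  rewrite tech5; specialize (Hf (S n)); lra.
Qed.

Lemma term_le_sum_f_R0 (f : nat -> R) (k n : nat) :
  (forall k, 0 <= f k) -> (k <= n)%nat -> f k <= sum_f_R0 f n.
Proof.
  intros Hf Hkn.
  apply Rle_trans with (sum_f_R0 f k); [| now apply sum_f_R0_nonneg_mono].
  destruct k as [| k]; simpl; [lra |].
  pose proof (cond_pos_sum f k Hf); lra.
Qed.

Definition overlap (a x p q : R) : R := Rmax 0 (Rmin x q - Rmax a p).

Ltac overlap_cases := unfold overlap, Rmax, Rmin; repeat destruct Rle_dec; lra.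

Lemma overlap_ge0 (a x p q : R) : 0 <= overlap a x p q.
Proof. overlap_cases. Qed.

Lemma overlap_le_length (a x p q : R) : p <= q -> overlap a x p q <= q - p.
Proof. intros; overlap_cases. Qed.

Lemma overlap_mono (a p q x y : R) : x <= y -> overlap a x p q <= overlap a y p q.
Proof. intros; overlap_cases. Qed.

Lemma overlap_incr (a p q y z : R) :
  a <= y -> p <= y -> y <= z -> z <= q -> z - y <= overlap a z p q - overlap a y p q.
Proof. intros; overlap_cases. Qed.

Definition cover_length (a x : R) (p q : nat -> R) (M : nat) : R :=
  sum_f_R0 (fun k => overlap a x (p k) (q k)) M.

Lemma cover_length_mono_x (a x y : R) (p q : nat -> R) (M : nat) :
  x <= y -> cover_length a x p q M <= cover_length a y p q M.
Proof. intros; apply sum_Rle; intros; now apply overlap_mono. Qed.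

Lemma cover_length_mono_M (a x : R) (p q : nat -> R) (M M' : nat) :
  (M <= M')%nat -> cover_length a x p q M <= cover_length a x p q M'.
Proof. apply sum_f_R0_nonneg_mono; intros; apply overlap_ge0. Qed.

Lemma cover_length_le (a x : R) (p q : nat -> R) (M : nat) :
  (forall k, p k <= q k) -> cover_length a x p q M <= sum_f_R0 (fun k => q k - p k) M.
Proof. intros; apply sum_Rle; intros; now apply overlap_le_length. Qed.

Lemma cover_length_incr (a y z : R) (p q : nat -> R) (M k : nat) :
  (k <= M)%nat -> a <= y -> p k <= y -> y <= z -> z <= q k ->
  cover_length a y p q M + (z - y) <= cover_length a z p q M.
Proof.
  intros HkM Hay Hpy Hyz Hzq.
  pose proof (overlap_incr a (p k) (q k) y z Hay Hpy Hyz Hzq).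
  assert (Hk : overlap a z (p k) (q k) - overlap a y (p k) (q k) <=
    sum_f_R0 (fun k => overlap a z (p k) (q k) - overlap a y (p k) (q k)) M).
  { apply (term_le_sum_f_R0 (fun k => overlap a z (p k) (q k) - overlap a y (p k) (q k)));
      [| exact HkM].
    intros l; pose proof (overlap_mono a (p l) (q l) y z Hyz); lra. }
  rewrite minus_sum in Hk; unfold cover_length; lra.
Qed.

Definition nonoverlapping (a x : R) (n : nat) (u v : nat -> R) : Prop :=
  (forall k, (k <= n)%nat -> a <= u k /\ u k <= v k /\ v k <= x) /\
  (forall k l, (k < l)%nat -> (l <= n)%nat -> v k <= u l).

Definition snoc (u : nat -> R) (n : nat) (y : R) : nat -> R :=
  fun k => if (k <=? n)%nat then u k else y.

Lemma nonoverlapping_widen (a y z : R) (n : nat) (u v : nat -> R) :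
  nonoverlapping a y n u v -> y <= z -> nonoverlapping a z n u v.
Proof.
  intros [Hin Hdisj] Hyz; split; [| exact Hdisj].
  intros k Hk; destruct (Hin k Hk); lra.
Qed.

Lemma nonoverlapping_snoc (a y z : R) (n : nat) (u v : nat -> R) :
  nonoverlapping a y n u v -> a <= y -> y <= z ->
  nonoverlapping a z (S n) (snoc u n y) (snoc v n z).
Proof.
  intros [Hin Hdisj] Hay Hyz; unfold snoc; split.
  - intros k Hk; destruct (Nat.leb_spec k n) as [Hkn | Hkn]; [destruct (Hin k Hkn) |]; lra.
  - intros k l Hkl Hl.
    destruct (Nat.leb_spec l n), (Nat.leb_spec k n) as [Hkn | Hkn]; try lia.
    + now apply Hdisj.
    + destruct (Hin k Hkn); lra.
Qed.

Lemma sum_snoc (F : R -> R -> R) (u v : nat -> R) (n : nat) (y z : R) :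
  sum_f_R0 (fun k => F (snoc u n y k) (snoc v n z k)) (S n) =
  sum_f_R0 (fun k => F (u k) (v k)) n + F y z.
Proof.
  rewrite tech5; unfold snoc; f_equal.
  - apply sum_eq; intros k Hk; destruct (Nat.leb_spec k n); [reflexivity | lia].
  - destruct (Nat.leb_spec (S n) n); [lia | reflexivity].
Qed.

Lemma null_set_subset (S1 S2 : R -> Prop) :
  (forall x, S1 x -> S2 x) -> null_set S2 -> null_set S1.
Proof.
  intros Hsub Hnull eps Heps.
  destruct (Hnull eps Heps) as (p & q & Hpq & Hcov & Hsum).
  exists p, q; split; [exact Hpq | split; [| exact Hsum]].
  intros x Hx; exact (Hcov x (Hsub x Hx)).
Qed.

Lemma derivable_pt_lim_0_small (g : R -> R) (x eps : R) :
  derivable_pt_lim g x 0 -> 0 < eps ->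
  exists d, 0 < d /\ forall w, Rabs (w - x) < d -> Rabs (g w - g x) <= eps * Rabs (w - x).
Proof.
  intros Hg Heps; destruct (Hg eps Heps) as [d Hd].
  exists d; split; [apply cond_pos |]; intros w Hw.
  destruct (Req_dec w x) as [-> | Hne].
  - rewrite !Rminus_diag, Rabs_R0; lra.
  - specialize (Hd (w - x) ltac:(lra) Hw).
    replace (x + (w - x)) with w in Hd by ring; rewrite Rminus_0_r in Hd.
    replace (g w - g x) with ((g w - g x) / (w - x) * (w - x)) by (field; lra).
    rewrite Rabs_mult; apply Rmult_le_compat_r; [apply Rabs_pos | lra].
Qed.

Section ZeroDerivative.

Variables (g : R -> R) (a eps : R) (p q : nat -> R).
Hypothesis eps_pos : 0 < eps.

(* Up to [eps] per unit length, the increment of [g] on [a, x] is carried by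
   finitely many nonoverlapping intervals inside the cover [(p k, q k)] of the
   points where [g' = 0] fails. *)
Definition approx (x : R) : Prop :=
  exists n u v M, nonoverlapping a x n u v /\
    sum_f_R0 (fun k => v k - u k) n <= cover_length a x p q M /\
    Rabs (g x - g a) <= eps * (x - a) + sum_f_R0 (fun k => Rabs (g (v k) - g (u k))) n.

Lemma approx_start : approx a.
Proof.
  exists 0%nat, (fun _ => a), (fun _ => a), 0%nat.
  split; [split; [intros; lra | intros; lia] |].
  unfold cover_length; simpl; rewrite !Rminus_diag, Rabs_R0.
  pose proof (overlap_ge0 a a (p 0%nat) (q 0%nat)); lra.
Qed.

Lemma approx_step_derivable (x : R) :
  derivable_pt_lim g x 0 ->
  exists d, 0 < d /\ forall y z, x - d < y <= x -> x <= z < x + d -> approx y -> approx z.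
Proof.
  intros Hg; destruct (derivable_pt_lim_0_small g x eps Hg eps_pos) as [d [Hd Hsmall]].
  exists d; split; [exact Hd |].
  intros y z Hy Hz (n & u & v & M & Hfam & Hlen & Hbound).
  exists n, u, v, M; split; [| split].
  - apply (nonoverlapping_widen a y); [exact Hfam | lra].
  - eapply Rle_trans; [exact Hlen | apply cover_length_mono_x; lra].
  - pose proof (Hsmall y ltac:(rewrite Rabs_left1; lra)) as Hgy.
    pose proof (Hsmall z ltac:(rewrite Rabs_right; lra)) as Hgz.
    rewrite (Rabs_left1 (y - x)) in Hgy by lra; rewrite (Rabs_right (z - x)) in Hgz by lra.
    rewrite Rabs_minus_sym in Hgy.
    replace (g z - g a) with ((g y - g a) + ((g x - g y) + (g z - g x))) by ring.
    pose proof (Rabs_triang (g y - g a) ((g x - g y) + (g z - g x))).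
    pose proof (Rabs_triang (g x - g y) (g z - g x)).
    lra.
Qed.

Lemma approx_step_covered (x : R) (k : nat) :
  p k < x < q k ->
  exists d, 0 < d /\ forall y z, x - d < y <= x -> x <= z < x + d -> a <= y -> approx y -> approx z.
Proof.
  intros Hx; exists (Rmin (x - p k) (q k - x)); split; [apply Rmin_pos; lra |].
  intros y z Hy Hz Hay (n & u & v & M & Hfam & Hlen & Hbound).
  assert (Hpy : p k <= y) by (revert Hy; unfold Rmin; destruct Rle_dec; lra).
  assert (Hzq : z <= q k) by (revert Hz; unfold Rmin; destruct Rle_dec; lra).
  exists (S n), (snoc u n y), (snoc v n z), (Nat.max M k); split; [| split].
  - apply nonoverlapping_snoc; [exact Hfam | exact Hay | lra].
  - rewrite (sum_snoc (fun s t => t - s)).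
    pose proof (cover_length_mono_M a y p q M (Nat.max M k) (Nat.le_max_l M k)).
    pose proof (cover_length_incr a y z p q (Nat.max M k) k (Nat.le_max_r M k) Hay Hpy
      ltac:(lra) Hzq).
    lra.
  - rewrite (sum_snoc (fun s t => Rabs (g t - g s))).
    replace (g z - g a) with ((g y - g a) + (g z - g y)) by ring.
    pose proof (Rabs_triang (g y - g a) (g z - g y)).
    assert (eps * (y - a) <= eps * (z - a)) by (apply Rmult_le_compat_l; lra).
    lra.
Qed.

Lemma approx_end (b : R) :
  a <= b -> (forall x, a <= x <= b -> derivable_pt_lim g x 0 \/ exists k, p k < x < q k) ->
  approx b.
Proof.
  intros Hab Hpts; apply (real_induction a); [exact Hab | exact approx_start |].
  intros x Hx; destruct (Hpts x Hx) as [Hg | [k Hk]].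
  - destruct (approx_step_derivable x Hg) as [d [Hd Hstep]].
    exists d; split; [exact Hd |]; intros y z Hy Hz _ _; now apply Hstep.
  - destruct (approx_step_covered x k Hk) as [d [Hd Hstep]].
    exists d; split; [exact Hd |]; intros y z Hy Hz Hay _; now apply Hstep.
Qed.

End ZeroDerivative.

Lemma abs_cont_deriv0_const (g : R -> R) (a b : R) :
  a <= b -> abs_cont_on g a b ->
  null_set (fun x => a <= x <= b /\ ~ derivable_pt_lim g x 0) -> g b = g a.
Proof.
  intros Hab Hac Hnull.
  assert (Hsmall : forall eps, 0 < eps -> Rabs (g b - g a) <= eps * (b - a + 1)).
  { intros eps Heps.
    destruct (Hac eps Heps) as [delta [Hdelta Hac_delta]].
    destruct (Hnull (delta / 2) ltac:(lra)) as (p & q & Hpq & Hcov & Hsum).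
    destruct (approx_end g a eps p q Heps b Hab) as (n & u & v & M & [Hin Hdisj] & Hlen & Hbound).
    { intros x Hx; destruct (classic (derivable_pt_lim g x 0)) as [Hg | Hg]; [now left | right].
      destruct (Hcov x (conj Hx Hg)) as [k Hk]; now exists k. }
    pose proof (cover_length_le a b p q M Hpq); pose proof (Hsum M).
    specialize (Hac_delta n u v Hin Hdisj ltac:(lra)).
    lra. }
  assert (Habs : Rabs (g b - g a) <= 0).
  { apply Rle_plus_epsilon; intros e He; rewrite Rplus_0_l.
    replace e with (e / (b - a + 1) * (b - a + 1)) by (field; lra).
    apply Hsmall, Rdiv_lt_0_compat; lra. }
  destruct (Req_dec (g b - g a) 0) as [H0 | Hne]; [lra |].
  pose proof (Rabs_pos_lt _ Hne); lra.
Qed.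

Lemma abs_cont_on_sub_linear (f : R -> R) (c a b : R) :
  abs_cont_on f a b -> abs_cont_on (fun x => f x - c * x) a b.
Proof.
  intros Hf eps Heps.
  pose proof (Rabs_pos c).
  set (K := Rabs c + 1); assert (HK : 0 < K) by (unfold K; lra).
  destruct (Hf (eps / 2) ltac:(lra)) as [d [Hd Hfd]].
  exists (Rmin d (eps / (2 * K))); split.
  { apply Rmin_pos; [exact Hd | apply Rdiv_lt_0_compat; lra]. }
  intros n u v Hin Hdisj Hlen.
  set (L := sum_f_R0 (fun k => v k - u k) n) in *.
  specialize (Hfd n u v Hin Hdisj ltac:(fold L; pose proof (Rmin_l d (eps / (2 * K))); lra)).
  apply Rle_lt_trans with
    (sum_f_R0 (fun k => Rabs (f (v k) - f (u k)) + (v k - u k) * Rabs c) n).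
  - apply sum_Rle; intros k Hk; destruct (Hin k Hk) as [_ [Huv _]].
    replace (f (v k) - c * v k - (f (u k) - c * u k))
      with ((f (v k) - f (u k)) + (v k - u k) * - c) by ring.
    eapply Rle_trans; [apply Rabs_triang |].
    rewrite Rabs_mult, Rabs_Ropp, (Rabs_right (v k - u k)) by lra; lra.
  - rewrite plus_sum, <- scal_sum; fold L.
    assert (Rabs c * L <= Rabs c * (eps / (2 * K))).
    { apply Rmult_le_compat_l; [apply Rabs_pos |].
      pose proof (Rmin_r d (eps / (2 * K))); lra. }
    assert (Rabs c * (eps / (2 * K)) <= K * (eps / (2 * K))).
    { apply Rmult_le_compat_r; [apply Rlt_le, Rdiv_lt_0_compat |]; unfold K; lra. }
    assert (K * (eps / (2 * K)) = eps / 2) by (field; lra).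
    lra.
Qed.

Lemma abs_cont_const_deriv (f : R -> R) (c a b : R) :
  a <= b -> abs_cont_on f a b ->
  null_set (fun x => a <= x <= b /\ ~ derivable_pt_lim f x c) ->
  f b - f a = c * (b - a).
Proof.
  intros Hab Hac Hnull.
  assert (Hg : (fun x => f x - c * x) b = (fun x => f x - c * x) a).
  { apply (abs_cont_deriv0_const (fun x => f x - c * x)); [exact Hab | now apply abs_cont_on_sub_linear |].
    refine (null_set_subset _ _ _ Hnull).
    intros x [Hx Hg0]; split; [exact Hx |]; intros Hf; apply Hg0.
    replace 0 with (c - c * 1) by ring.
    exact (derivable_pt_lim_minus f (mult_real_fct c id) x c (c * 1) Hf
      (derivable_pt_lim_scal id c x 1 (derivable_pt_lim_id x))). }
  cbv beta in Hg; lra.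
Qed.

Definition binary (N : nat) (v : vec) : Prop :=
  forall i, (i < N)%nat -> v i = 0 \/ v i = 1.

Section Sweep.

Variables (N : nat) (k s0 t : R) (v : R -> vec).
Hypotheses (k_pos : 0 < k) (s0_lt_t : s0 < t).
Hypothesis v_affine :
  forall i x, (i < N)%nat -> s0 <= x <= t -> v x i = v s0 i + k * (x - s0).
Hypothesis v_inC : forall x, s0 < x < t -> inC N (v x).

Lemma sweep_start_lt1 (i : nat) : (i < N)%nat -> v s0 i < 1.
Proof.
  intros Hi; set (x := (s0 + t) / 2).
  destruct (v_inC x ltac:(unfold x; lra) i Hi) as [_ Hx1].
  rewrite (v_affine i x Hi) in Hx1 by (unfold x; lra).
  assert (0 < k * (x - s0)) by (apply Rmult_lt_0_compat; unfold x; lra).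
  lra.
Qed.

Lemma sweep_end_le1 (i : nat) : (i < N)%nat -> v t i <= 1.
Proof.
  intros Hi; apply Rle_plus_epsilon; intros e He.
  set (h := Rmin (e / k) ((t - s0) / 2)).
  assert (Hh : 0 < h <= (t - s0) / 2).
  { split; [apply Rmin_pos; [apply Rdiv_lt_0_compat |] | apply Rmin_r]; lra. }
  assert (Hkh : k * h <= e).
  { apply Rle_trans with (k * (e / k)); [apply Rmult_le_compat_l; [lra | apply Rmin_l] |].
    right; field; lra. }
  destruct (v_inC (t - h) ltac:(lra) i Hi) as [_ Hx1].
  rewrite (v_affine i _ Hi) in Hx1 by lra; rewrite (v_affine i _ Hi) by lra.
  lra.
Qed.

Lemma sweep_preserves_As : in_As N (v s0) -> in_As N (v t).
Proof.
  intros Hs0.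
  assert (Hsync : exists mu, 0 <= mu <= 1 /\ forall i, (i < N)%nat -> v s0 i = mu).
  { destruct Hs0 as [Hsync | Hbin]; [exact Hsync |].
    exists 0; split; [lra |]; intros i Hi.
    destruct (Hbin i Hi) as [H0 | H1]; [exact H0 |].
    pose proof (sweep_start_lt1 i Hi); lra. }
  destruct Hsync as [mu [Hmu Hsync]].
  destruct (Nat.eq_dec N 0) as [HN | HN]; [right; intros i Hi; lia |].
  left; exists (mu + k * (t - s0)); split.
  - assert (0 < k * (t - s0)) by (apply Rmult_lt_0_compat; lra).
    assert (HN0 : (0 < N)%nat) by lia.
    pose proof (sweep_end_le1 0 HN0) as Hend.
    rewrite (v_affine 0 t HN0), (Hsync 0%nat HN0) in Hend by lra.
    lra.
  - intros i Hi; rewrite (v_affine i t Hi), (Hsync i Hi) by lra; reflexivity.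
Qed.

End Sweep.

Lemma jump_start_binary (N : nat) (tau : vec) : inD N tau -> in_As N tau -> binary N tau.
Proof.
  intros [_ [i0 [Hi0 Hfire]]] [[mu [_ Hsync]] | Hbin]; [| exact Hbin].
  intros i Hi; right; rewrite Hsync by exact Hi.
  rewrite <- (Hsync i0 Hi0); exact Hfire.
Qed.

Lemma G0_values (N : nat) (El : nat -> nat -> Prop) (r tau g : vec) (j : nat) :
  G0 N El r tau g -> (j < N)%nat -> g j = 0 \/ g j = 1 \/ g j = tau j.
Proof.
  intros [_ [i [_ [_ [Hgi Hrest]]]]] Hj.
  destruct (Nat.eq_dec j i) as [-> | Hji]; [now left |].
  destruct (Hrest j Hj Hji) as [[_ [[_ H] | [[_ [H | H]] | [_ H]]]] | [_ H]]; auto.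
Qed.

Lemma Un_cv_eq0_or_vanishing (u w : nat -> R) (m : R) :
  (forall n, u n = 0 \/ u n = w n) -> Un_cv w 0 -> Un_cv u m -> m = 0.
Proof.
  intros Huw Hw Hu; apply (UL_sequence u); [exact Hu |].
  intros e He; destruct (Hw e He) as [n0 Hn0]; exists n0; intros n Hn.
  destruct (Huw n) as [-> | ->]; [rewrite Rdist_eq; exact He | exact (Hn0 n Hn)].
Qed.

Lemma Ghull_binary (N : nat) (El : nat -> nat -> Prop) (r tau g : vec) :
  Ghull N El r tau g -> binary N tau -> binary N g.
Proof.
  intros (ts & gs & HG0 & Hcv) Hbin j Hj; destruct (Hcv j Hj) as [Hts Hgs].
  (* [x * x - x] is continuous and vanishes exactly on {0, 1} *)
  assert (Hroot : g j * g j - g j = 0).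
  { apply (Un_cv_eq0_or_vanishing (fun n => gs n j * gs n j - gs n j)
                                  (fun n => ts n j * ts n j - ts n j)).
    - intros n; destruct (G0_values _ _ _ _ _ j (HG0 n) Hj) as [-> | [-> | ->]];
        [left; ring | left; ring | now right].
    - replace 0 with (tau j * tau j - tau j) by (destruct (Hbin j Hj) as [-> | ->]; ring).
      exact (CV_minus _ _ _ _ (CV_mult _ _ _ _ Hts Hts) Hts).
    - exact (CV_minus _ _ _ _ (CV_mult _ _ _ _ Hgs Hgs) Hgs). }
  replace (g j * g j - g j) with (g j * (g j - 1)) in Hroot by ring.
  destruct (Rmult_integral _ _ Hroot); [left | right]; lra.
Qed.

Lemma jump_preserves_As (N : nat) (El : nat -> nat -> Prop) (r tau g : vec) :
  inD N tau -> in_As N tau -> Ghull N El r tau g -> in_As N g.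
Proof.
  intros HD HAs HG; right.
  exact (Ghull_binary N El r tau g HG (jump_start_binary N tau HD HAs)).
Qed.

Section Flow.

Variables (N : nat) (T : R) (r : vec) (xi : nat -> nat -> nat -> Prop).
Variables (dom : R -> nat -> Prop) (tau : R -> nat -> vec) (lam : R -> nat -> nat).
Hypothesis sol : is_solution N T r xi dom tau lam.
Variables (j : nat) (s0 t : R).
Hypothesis s0_lt_t : s0 < t.
Hypothesis flow_interval : forall s, s0 <= s <= t -> dom s j.

Let flows : exists a b, a < b /\ forall s, a < s < b -> dom s j.
Proof. exists s0, t; split; [exact s0_lt_t | intros; apply flow_interval; lra]. Qed.

Lemma flow_inC (x : R) : s0 < x < t -> inC N (tau x j).
Proof.
  intros Hx; destruct sol as (_ & _ & Hflow & _).
  apply (proj1 (Hflow j flows)).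
  exists (Rmin (x - s0) (t - x)); split; [apply Rmin_pos; lra |].
  intros s Hs; apply flow_interval.
  pose proof (Rmin_l (x - s0) (t - x)); pose proof (Rmin_r (x - s0) (t - x)); lra.
Qed.

Lemma flow_affine (i : nat) (x : R) :
  (i < N)%nat -> s0 <= x <= t -> tau x j i = tau s0 j i + 1 / T * (x - s0).
Proof.
  intros Hi Hx; destruct sol as ((_ & Hac) & _ & Hflow & _).
  enough (tau x j i - tau s0 j i = 1 / T * (x - s0)) by lra.
  apply (abs_cont_const_deriv (fun s => tau s j i)); [lra | |].
  - apply (proj1 (Hac j) i Hi); [lra |]; intros; apply flow_interval; lra.
  - refine (null_set_subset _ _ _ (proj2 (Hflow j flows))).
    intros y [Hy Hnd]; split; [apply flow_interval; lra |].
    intros (_ & Hd & _); exact (Hnd (Hd i Hi)).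
Qed.

End Flow.

Lemma flow_preserves_As (N : nat) (T : R) (r : vec) (xi : nat -> nat -> nat -> Prop)
    (dom : R -> nat -> Prop) (tau : R -> nat -> vec) (lam : R -> nat -> nat) (j : nat) (s0 t : R) :
  is_solution N T r xi dom tau lam -> 0 < T -> s0 <= t ->
  (forall s, s0 <= s <= t -> dom s j) ->
  in_As N (tau s0 j) -> in_As N (tau t j).
Proof.
  intros Hsol HT Hle Hint Hs0.
  destruct (Rle_lt_or_eq_dec s0 t Hle) as [Hlt | <-]; [| exact Hs0].
  apply (sweep_preserves_As N (1 / T) s0 t (fun s => tau s j)); [| exact Hlt | | | exact Hs0].
  - apply Rdiv_lt_0_compat; lra.
  - intros i x; exact (flow_affine N T r xi dom tau lam Hsol j s0 t Hlt Hint i x).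
  - exact (flow_inC N T r xi dom tau lam Hsol j s0 t Hlt Hint).
Qed.

Lemma time_domain_initial_segment (dom : R -> nat -> Prop) (t : R) :
  hybrid_time_domain dom -> dom t 0%nat -> forall s, 0 <= s <= t -> dom s 0%nat.
Proof.
  intros [_ Htrunc] Ht s Hs.
  destruct (Htrunc t 0%nat Ht) as (tt & Ht0 & _ & HtS & Hchar).
  apply (proj2 (Hchar s 0%nat)); split; [lia | rewrite Ht0, HtS; exact Hs].
Qed.

Lemma time_domain_jump_segment (dom : R -> nat -> Prop) (t : R) (j : nat) :
  hybrid_time_domain dom -> dom t (S j) ->
  exists s0, s0 <= t /\ dom s0 j /\ forall s, s0 <= s <= t -> dom s (S j).
Proof.
  intros [_ Htrunc] Ht.
  destruct (Htrunc t (S j) Ht) as (tt & _ & Hmono & HtS & Hchar).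
  assert (Hs0t : tt (S j) <= t) by (rewrite <- HtS; apply Hmono; lia).
  exists (tt (S j)); split; [exact Hs0t | split].
  - apply (proj2 (Hchar (tt (S j)) j)); split; [lia | split; [apply Hmono; lia | lra]].
  - intros s Hs; apply (proj2 (Hchar s (S j))); split; [lia | rewrite HtS; exact Hs].
Qed.

Theorem lemma2 (N : nat) (E : nat -> nat -> Prop) (T : R) (r : nat -> R)
    (xi : nat -> nat -> nat -> Prop) :
  simple_digraph N E ->
  0 < T ->
  (forall j, (j < N)%nat -> 0 < r j < 1) ->
  (forall k, (1 <= k)%nat -> feasible E (xi k)) ->
  forall (dom : R -> nat -> Prop) (tau : R -> nat -> vec) (lam : R -> nat -> nat),
    is_solution N T r xi dom tau lam ->
    complete dom ->
    in_As N (tau 0 0%nat) ->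
    forall t j, dom t j -> in_As N (tau t j).
Proof.
  intros _ HT _ _ dom tau lam Hsol _ Hinit t j.
  pose proof Hsol as [[Hhtd _] [_ [_ Hjump]]].
  revert t; induction j as [| j IH]; intros t Ht.
  - apply (flow_preserves_As N T r xi dom tau lam 0%nat 0 t Hsol HT); [| | exact Hinit].
    + exact (proj1 Hhtd t 0%nat Ht).
    + exact (time_domain_initial_segment dom t Hhtd Ht).
  - destruct (time_domain_jump_segment dom t j Hhtd Ht) as (s0 & Hs0t & Hpre & Hint).
    destruct (Hjump s0 j Hpre (Hint s0 ltac:(lra))) as (HD & HG & _).
    apply (flow_preserves_As N T r xi dom tau lam (S j) s0 t Hsol HT Hs0t Hint).
    exact (jump_preserves_As N _ r _ _ HD (IH s0 Hpre) HG).
Qed.
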